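(* In the setting described in the context, let $(H,F^\bullet,W_\bullet)$ be the limiting mixed Hodge structure on $H=H^3(Y_s;\mathbb{C})$, $s\in S^*$. Then $$\dim_{\mathbb{C}}\bigl(F^2\cap\overline{F^1}\bigr)=h+1,$$ where $h=h^{2,1}(X)$.
   Context: Setting: $X$ is a projective Calabi-Yau threefold with $h=\dim H^1(X;\Omega^2_X)$, so $\dim H^3(X;\mathbb{C})=2h+2$. $C_1,\dots,C_r\subset X$ are disjoint smooth rational curves with normal bundles $\mathcal{O}(-1)\oplus\mathcal{O}(-1)$, whose classes span $H^4(X;\mathbb{C})$ and satisfy $\sum m_i[C_i]=0$ with all $m_i\ne0$; $\bar X$ is the contraction of the $C_i$ to ordinary double points. Let $\bar S$ be the base (a germ of $\mathbb{T}^1_{\bar X}=\mathrm{Ext}^1(\Omega^1_{\bar X},\mathcal{O}_{\bar X})$) of the semi-universal deformation of $\bar X$, let $S\to\bar S$ be the double cover branched along the smooth hypersurface $\bar S\cap H^1(\bar X,T^0_{\bar X})$, $D\subset S$ the inverse image of that hypersurface, and $\pi:\mathcal{Y}\to S$ the family obtained by pulling back the deformation and blowing up the singular points of the total space; $\mathcal{Y}$ is smooth and $\pi^{-1}(D)$ is a normal crossing divisor. Identify $S\cong\Delta^h\times\Delta$ with $D=\{\zeta=0\}$ and $S^*=S\setminus D$. The central fibre is $Y_0=\tilde X\cup\bigcup_i Q_i$, where $\tilde X$ is the blow-up of $X$ along the $C_i$ with exceptional divisors $E_i\cong\mathbb{P}^1\times\mathbb{P}^1$, $Q_i\subset\mathbb{P}^4$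 a smooth quadric containing $E_i$ as a hyperplane section, glued along $E_i$. The limiting mixed Hodge structure $(H,F^\bullet,W_\bullet)$ on $H=H^3(Y_s;\mathbb{C})$ ($s\in S^*$), defined over $\mathbb{Q}$ (Schmid, Steenbrink), has the following known properties: $0=W_1\subset W_2\subset W_3\subset W_4=H$ with $W_2\cong\mathbb{Q}(-1)$ one-dimensional, $W_3/W_2\cong H^3(\tilde X)\cong H^3(X)$ as Hodge structures, $W_4/W_3\cong\mathbb{Q}(-2)$; $\dim F^1=2h+3$ and $W_2\subset F^1$; $\dim F^2=h+2$, $F^2\cap W_2=0$ and $F^2+W_3=H$; $F^3\subseteq W_3$. Complex conjugation is with respect to the rational structure $H^3(Y_s;\mathbb{Q})$. *)

From mathcomp Require Import all_boot all_order all_algebra.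
Set Implicit Arguments. Unset Strict Implicit. Unset Printing Implicit Defensive.
Import GRing.Theory Num.Theory.
Local Open Scope ring_scope.

(* H = C^n (row vectors), C a numeric closed field (e.g. the complex numbers),
   with rational structure Q^n (entries in ratr rat) and complex conjugation
   Num.conj applied entrywise.  Subspaces are represented by row spaces of
   square matrices (mxalgebra, scope %MS). *)

Definition cconj_mx {C : numClosedFieldType} {n : nat} (A : 'M[C]_n) : 'M[C]_n :=
  map_mx (@Num.conj C) A.

Definition defined_over_Q {C : numClosedFieldType} {n : nat} (V : 'M[C]_n) :=
  exists A : 'M[rat]_n, (map_mx (@ratr C) A == V)%MS.

(* preimage in W3 of the induced filtration on Gr^W_3 = W3/W2:
   (F :&: W3 + W2); its image in W3/W2 is F^p Gr_3. *)
Definition grW {C : fieldType} {n : nat} (W2 W3 F : 'M[C]_n) : 'M[C]_n :=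
  ((F :&: W3) + W2)%MS.

(* The induced filtration F1 ⊇ F2 ⊇ F3 (with F^0 = everything, F^4 = 0) is a
   pure Hodge structure of weight 3 on W3/W2:
   F^p Gr ⊕ conj(F^(4-p) Gr) = Gr for p = 1,2,3, expressed on preimages. *)
Definition pure_weight3 {C : numClosedFieldType} {n : nat}
  (W2 W3 F1 F2 F3 : 'M[C]_n) : Prop :=
  let opp p := match p with 1 => F1 | 2 => F2 | _ => F3 end in
  forall p : nat, (1 <= p <= 3)%N ->
    ((grW W2 W3 (opp p) + cconj_mx (grW W2 W3 (opp (4 - p)%N)) == W3)%MS /\
     (grW W2 W3 (opp p) :&: cconj_mx (grW W2 W3 (opp (4 - p)%N)) == W2)%MS).

From mathcomp Require Import all_boot all_order all_algebra.
From mathcomp Require Import zify.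

Set Implicit Arguments.
Unset Strict Implicit.
Unset Printing Implicit Defensive.
Import GRing.Theory Num.Theory.
Local Open Scope ring_scope.

(* conj F^1 is a hyperplane containing the rational line W2 (as W2 ⊆ F^1).
   It cannot contain F^2: otherwise it would contain F^3 and W2, and by
   purity of Gr^W_3 (F^3 and conj F^1 together span W3 modulo W2) also W3,
   hence all of F^2 + W3 = H.  So F^2 + conj F^1 = H, and
   dim (F^2 ∩ conj F^1) = (h + 2) + (2h + 3) - (2h + 4) = h + 1. *)

Lemma mxrank_cap_hyperplane (F : fieldType) (m n : nat)
    (A : 'M[F]_(m, n)) (G : 'M[F]_n) :
  (\rank G).+1 = n -> ~~ (A <= G)%MS -> (\rank (A :&: G)).+1 = \rank A.
Proof.
move=> rG notAG.
have ltG : (G < A + G)%MS by rewrite ltmxE addsmxSr addsmx_sub submx_refl andbT.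
have rAG : \rank (A + G)%MS = n.
  by apply/eqP; rewrite eqn_leq rank_leq_col -[X in (X <= _)%N]rG rank_ltmx.
by move: (mxrank_sum_cap A G) rG; rewrite rAG; lia.
Qed.

Section ComplexConjugation.

Variables (C : numClosedFieldType) (n : nat).
Implicit Types A B W : 'M[C]_n.

Lemma cconj_submx A B : (A <= B)%MS -> (cconj_mx A <= cconj_mx B)%MS.
Proof. by move=> sAB; rewrite map_submx. Qed.

Lemma mxrank_cconj A : \rank (cconj_mx A) = \rank A.
Proof. exact: mxrank_map. Qed.

Lemma defined_over_Q_cconj W : defined_over_Q W -> (W <= cconj_mx W)%MS.
Proof.
case=> A /eqmxP defW.
have conjA : cconj_mx (map_mx (@ratr C) A) = map_mx (@ratr C) A.
  by apply/matrixP => i j; rewrite !mxE fmorph_rat.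
by rewrite -defW -[X in (X <= _)%MS]conjA cconj_submx ?defW.
Qed.

Lemma pure_weight3_W3_sub (W2 W3 F1 F2 F3 : 'M[C]_n) :
  pure_weight3 W2 W3 F1 F2 F3 -> (W2 <= F1)%MS ->
  (W3 <= F3 + W2 + cconj_mx F1)%MS.
Proof.
move=> pure W2F1; have [/eqmxP <- _] := pure 3%N isT.
rewrite addsmxS ?addsmxS ?capmxSl // cconj_submx //.
by rewrite addsmx_sub capmxSl W2F1.
Qed.

End ComplexConjugation.

Theorem lemma3p3 (C : numClosedFieldType) (h : nat)
  (W2 W3 F1 F2 F3 : 'M[C]_(2 * h + 4)) :
  (* weight filtration 0 = W1 ⊂ W2 ⊂ W3 ⊂ W4 = H, defined over Q *)
  defined_over_Q W2 -> defined_over_Q W3 ->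
  (W2 <= W3)%MS ->
  \rank W2 = 1%N ->                       (* W2 ≅ Q(-1), one-dimensional *)
  \rank W3 = (2 * h + 3)%N ->             (* Gr_3 ≅ H^3(X) has dim 2h+2, Gr_4 dim 1 *)
  (* Hodge filtration F^3 ⊆ F^2 ⊆ F^1 ⊆ F^0 = H *)
  (F3 <= F2)%MS -> (F2 <= F1)%MS ->
  \rank F1 = (2 * h + 3)%N -> (W2 <= F1)%MS ->
  \rank F2 = (h + 2)%N -> \rank (F2 :&: W2)%MS = 0%N -> row_full (F2 + W3)%MS ->
  (F3 <= W3)%MS ->
  (* W3/W2 ≅ H^3(X) as Hodge structures: pure of weight 3, h^{3,0} = 1, h^{2,1} = h *)
  pure_weight3 W2 W3 F1 F2 F3 ->
  \rank (grW W2 W3 F3) = (\rank W2 + 1)%N ->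
  \rank (grW W2 W3 F2) = (\rank W2 + (h + 1))%N ->
  \rank (F2 :&: cconj_mx F1)%MS = (h + 1)%N.
Proof.
move=> QW2 _ _ _ _ F32 F21 rF1 W2F1 rF2 _ fullF2W3 _ pure _ _.
set G := cconj_mx F1.
have rG : (\rank G).+1 = (2 * h + 4)%N by rewrite mxrank_cconj rF1 -addn1 -addnA.
have W2G : (W2 <= G)%MS.
  exact: submx_trans (defined_over_Q_cconj QW2) (cconj_submx W2F1).
have notF2G : ~~ (F2 <= G)%MS.
  apply/negP => F2G.
  have W3G : (W3 <= G)%MS.
    apply: submx_trans (pure_weight3_W3_sub pure W2F1) _.
    by rewrite !addsmx_sub (submx_trans F32 F2G) W2G submx_refl.
  have F2W3G : (F2 + W3 <= G)%MS by rewrite addsmx_sub F2G W3G.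
  by move/mxrankS: F2W3G; rewrite (eqP fullF2W3) -[X in (X <= _)%N]rG ltnn.
by apply: succn_inj; rewrite mxrank_cap_hyperplane // rF2 addnS.
Qed.
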